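(* Consider the controlled SI optimal control problem described in the context, with one control per node ($M=N$) and given (fixed) initial conditions. Let $(\boldsymbol i^*(t), \boldsymbol\lambda^*(t), \boldsymbol u^*(t))$, $t\in[0,T]$, be an optimal state trajectory, its associated adjoint trajectory, and optimal controls satisfying the Pontryagin Maximum Principle conditions listed in the context. Then $\lambda_j^*(t)\geq 0$ for all $1\leq j\leq N$ and all $t\in[0,T]$.
   Context: Let $N\geq 1$, and let $\boldsymbol A=(A_{jk})$ be an $N\times N$ symmetric matrix with entries in $\{0,1\}$ (adjacency matrix of an undirected, unweighted network on nodes $1,\dots,N$). Fix $\beta>0$, a horizon $T>0$, and initial values $x_{0j}\in[0,1]$. Each node $j$ has its own control $u_j(t)$. The state $i_j(t)\in[0,1]$ (probability node $j$ is informed), with $s_j(t)=1-i_j(t)$, evolves by $\dot i_j(t)=\beta s_j(t)\sum_{k=1}^N A_{jk}i_k(t)+u_j(t)s_j(t)$, $i_j(0)=x_{0j}$, $1\le j\le N$. The objective to be maximized is $J=\frac1N\sum_{j=1}^N i_j(T)-\sum_{j=1}^N\int_0^T g_j(u_j(t))\,dt$, where each $g_j:\mathbb R\to\mathbb R$ is differentiable, strictly convex, even, increasing on $[0,\infty)$, and satisfies $g_j(0)=0$ (so $g_j\ge 0$). The optimal controls are nonnegative: $u_j^*(t)\ge 0$. The Hamiltonian is $H(\boldsymbol i,\boldsymbol\lambda,\boldsymbol u)=-\sum_{j=1}^N g_j(u_j)+\sum_{l=1}^N\lambda_l\big(\beta s_l\sum_{k=1}^N A_{lk}i_k+u_l s_l\big)$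 with $s_l=1-i_l$. The Pontryagin conditions are: $\boldsymbol i^*$ solves the state equations above; the adjoint variables satisfy $\dot\lambda_j^*(t)=-\beta\sum_{l=1}^N\lambda_l^*(t)s_l^*(t)A_{lj}+\beta\lambda_j^*(t)\sum_{k=1}^N A_{jk}i_k^*(t)+\lambda_j^*(t)u_j^*(t)$ with $\lambda_j^*(T)=1/N$; and for each $t$, $\boldsymbol u^*(t)$ maximizes $H(\boldsymbol i^*(t),\boldsymbol\lambda^*(t),\cdot)$ over control values. *)

From HB Require Import structures.
From mathcomp Require Import all_boot all_order all_algebra.
From mathcomp Require Import all_classical all_reals all_analysis.
Set Implicit Arguments. Unset Strict Implicit. Unset Printing Implicit Defensive.
Import Order.TTheory GRing.Theory Num.Theory.
Import numFieldNormedType.Exports.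
Local Open Scope classical_set_scope.
Local Open Scope ring_scope.

Section SIControl.
Variables (R : realType) (N : nat).

Definition adjacency (A : 'M[R]_N) : Prop :=
  (forall j k, A j k = 0 \/ A j k = 1) /\ (forall j k, A j k = A k j).

Definition cost_fun (g : R -> R) : Prop :=
  (forall x, derivable g x 1) /\
  (forall x y a, x != y -> 0 < a < 1 ->
     g (a * x + (1 - a) * y) < a * g x + (1 - a) * g y) /\
  (forall x, g (- x) = g x) /\
  (forall x y, 0 <= x -> x <= y -> g x <= g y) /\
  g 0 = 0.

Definition state_rhs (A : 'M[R]_N) (beta : R) (i : 'I_N -> R) (u : 'I_N -> R)
  (j : 'I_N) : R :=
  beta * (1 - i j) * (\sum_(k < N) A j k * i k) + u j * (1 - i j).

Definition adjoint_rhs (A : 'M[R]_N) (beta : R) (i lam u : 'I_N -> R)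
  (j : 'I_N) : R :=
  - beta * (\sum_(l < N) lam l * (1 - i l) * A l j)
  + beta * lam j * (\sum_(k < N) A j k * i k) + lam j * u j.

Definition hamiltonian (A : 'M[R]_N) (beta : R) (g : 'I_N -> R -> R)
  (i lam u : 'I_N -> R) : R :=
  - (\sum_(j < N) g j (u j))
  + \sum_(l < N) lam l * (beta * (1 - i l) * (\sum_(k < N) A l k * i k)
                          + u l * (1 - i l)).

Definition admissible (A : 'M[R]_N) (beta T : R) (x0 : 'I_N -> R)
  (u i : R -> 'I_N -> R) : Prop :=
  (forall j, measurable_fun `[0, T] (fun t => u t j)) /\
  (forall j, {within `[0, T], continuous (fun t => i t j)}) /\
  (forall j, i 0 j = x0 j) /\
  (forall j t, 0 < t < T ->
     is_derive t (1 : R) (fun s => i s j) (state_rhs A beta (i t) (u t) j)).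

Definition objective (g : 'I_N -> R -> R) (T : R) (u i : R -> 'I_N -> R)
  : \bar R :=
  ((N%:R)^-1 * \sum_(j < N) i T j)%:E
  - (\sum_(j < N) \int[@lebesgue_measure R]_(t in `[0%R, T]%classic) (g j (u t j))%:E)%E.

End SIControl.

From HB Require Import structures.
From mathcomp Require Import all_boot all_order all_algebra.
From mathcomp Require Import all_classical all_reals all_analysis.
From mathcomp Require Import ring lra.
Set Implicit Arguments. Unset Strict Implicit. Unset Printing Implicit Defensive.
Import Order.TTheory GRing.Theory Num.Theory.
Import numFieldNormedType.Exports.
Local Open Scope classical_set_scope.
Local Open Scope ring_scope.

(* Perturbing the control u_l alone in the maximum condition shows that
   c = lam_l (1 - i_l) maximizes w |-> c w - g_l(w) at some u_l >= 0;
   since g_l(w) = o(w) at 0, this forces c >= 0.  Hence the coupling term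
   - beta sum_l lam_l s_l A_lj of the adjoint equation is nonpositive, and
   wherever lam_j < 0 we get lam_j' <= m lam_j, with m the minimum over
   [0, T] of beta sum_k A_jk i_k.  Then exp(-m t) lam_j(t) is nonincreasing
   on any interval where lam_j < 0, so lam_j cannot be negative before
   reaching the terminal value lam_j(T) = 1/N > 0. *)

Section CostFunction.
Variables (R : realType) (g : R -> R).
Hypothesis gP : cost_fun g.

Lemma cost_fun_ge0 x : 0 <= g x.
Proof.
have [_ [_ [gN [gle g0]]]] := gP.
have [x0|x0] := leP 0 x; first by rewrite -g0 gle.
by rewrite -gN -g0 gle // oppr_ge0 ltW.
Qed.

Lemma is_derive0_cost_fun : is_derive (0 : R) 1 g 0.
Proof.
have [gd [_ [_ [_ g0]]]] := gP.
apply: (@derive1_at_min _ g (-1) 1) => //.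
- by rewrite in_itv /= ltrN10 ltr01.
- by move=> t _; rewrite g0 cost_fun_ge0.
Qed.

Lemma cost_fun_lt_linear c : 0 < c -> exists2 h, 0 < h & g h < c * h.
Proof.
move=> c0; have [_ [_ [_ [_ g0]]]] := gP.
case: is_derive0_cost_fun => gd g'0.
move: gd; rewrite /derivable -/(derive g 0 1) g'0 => /cvgr_lt /(_ c c0).
rewrite near_withinE => /nbhs_ballP [e /= e0 He].
have e20 : 0 < e / 2 by rewrite divr_gt0.
exists (e / 2) => //.
have := He (e / 2); rewrite /ball /= sub0r normrN gtr0_norm //.
rewrite ltr_pdivrMr // ltr_pMr // ltr1n gt_eqF // => /(_ isT isT).
rewrite addr0 g0 subr0 /GRing.scale /= mulr1.
by rewrite mulrC ltr_pdivrMr // mulrC.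
Qed.

Lemma cost_fun_argmax_coef_ge0 c u : 0 <= u ->
  (forall w, c * w - g w <= c * u - g u) -> 0 <= c.
Proof.
move=> u0 umax; rewrite leNgt; apply/negP => c0.
have [h h0 gh] : exists2 h, 0 < h & g h < - c * h.
  by apply: cost_fun_lt_linear; rewrite oppr_gt0.
have [_ [_ [gN _]]] := gP.
have := umax (- h); rewrite gN.
have : c * u <= 0 by rewrite mulr_le0_ge0 // ltW.
have := cost_fun_ge0 u.
lra.
Qed.

End CostFunction.

Lemma sumr_update (V : zmodType) (T : Type) n (F : 'I_n -> T -> V)
    (u : 'I_n -> T) l w :
  \sum_(k < n) F k (if k == l then w else u k) - \sum_(k < n) F k (u k)
  = F l w - F l (u l).
Proof.
rewrite -sumrB (bigD1 l) //= eqxx big1 ?addr0 // => k /negbTE ->.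
by rewrite subrr.
Qed.

Section Hamiltonian.
Variables (R : realType) (N : nat) (A : 'M[R]_N) (beta : R).
Variables (g : 'I_N -> R -> R) (i lam : 'I_N -> R).

Lemma hamiltonian_update u l w :
  hamiltonian A beta g i lam (fun k => if k == l then w else u k)
  - hamiltonian A beta g i lam u
  = (lam l * (1 - i l) * w - g l w) - (lam l * (1 - i l) * u l - g l (u l)).
Proof.
pose F k x := lam k * (beta * (1 - i k) * (\sum_(m < N) A k m * i m) + x * (1 - i k))
  - g k x.
have HF v : hamiltonian A beta g i lam v = \sum_(k < N) F k (v k).
  by rewrite /hamiltonian big_split /= sumrN addrC.
rewrite !HF sumr_update /F; ring.
Qed.

Lemma hamiltonian_argmax_costate_ge0 u l : cost_fun (g l) -> 0 <= u l ->
  (forall v, hamiltonian A beta g i lam v <= hamiltonian A beta g i lam u) ->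
  0 <= lam l * (1 - i l).
Proof.
move=> gP ul0 umax; apply: (cost_fun_argmax_coef_ge0 gP ul0) => w.
by rewrite -subr_le0 -hamiltonian_update subr_le0.
Qed.

End Hamiltonian.

Section RealAnalysis.
Variable R : realType.

Lemma continuous_sum (T : topologicalType) n (h : 'I_n -> T -> R) x :
  (forall k, {for x, continuous (h k)}) ->
  {for x, continuous (fun y => \sum_(k < n) h k y)}.
Proof.
move=> hc; rewrite -fct_sumE.
apply: (big_ind (fun f : T -> R => {for x, continuous f})) => //.
- exact: cvg_cst.
- by move=> f1 f2 f1c f2c; apply: continuousD.
Qed.

Lemma is_derive_expRM (k x : R) :
  is_derive x 1 (fun s => expR (k * s)) (k * expR (k * x)).
Proof.
have kd : is_derive x 1 ( *%R k) k.
  by apply: is_derive_eq; rewrite /GRing.scale /= mulr1.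
have kxd : derivable (expR \o *%R k) x 1.
  apply/derivable1_diffP/differentiable_comp.
    by apply/derivable1_diffP; case: kd.
  exact/derivable1_diffP/derivable_expR.
apply: DeriveDef; first exact: kxd.
rewrite -derive1E derive1_comp; last exact: derivable_expR.
  by rewrite !derive1E !derive_val mulrC.
by case: kd.
Qed.

Lemma within_continuous_lt0 (f : R -> R) (a b x : R) :
  {within `[a, b], continuous f} -> a <= x <= b -> f x < 0 ->
  exists2 e, 0 < e & forall y, a <= y <= b -> `|y - x| < e -> f y < 0.
Proof.
move=> fc xab fx0.
have /cvgr_lt /(_ 0 fx0) := (proj1 (subspace_continuousP _ _) fc) x xab.
rewrite near_withinE => /nbhs_ballP [e /= e0 fe].
exists e => // y yab yx; apply: fe => //.
by rewrite /ball /= distrC.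
Qed.

Lemma first_nonneg_after (f : R -> R) (a b t : R) :
  {within `[a, b], continuous f} -> a <= t <= b -> f t < 0 -> 0 <= f b ->
  exists2 c, t < c <= b & 0 <= f c /\ forall s, t <= s < c -> f s < 0.
Proof.
move=> fc /andP[ta tb] ft0 fb0.
pose S := [set s | t <= s <= b /\ 0 <= f s].
have Sb : S b by rewrite /S /= tb lexx.
have Slb : has_lbound S by exists t => s [/andP[]].
have hS : has_inf S by split => //; exists b.
pose c := inf S.
have tc : t <= c by apply: lb_le_inf; [exists b | move=> s [/andP[]]].
have cb : c <= b by apply: ge_inf.
have fc0 : 0 <= f c.
  rewrite leNgt; apply/negP => fc0.
  have cab : a <= c <= b by apply/andP; split; lra.
  have [e e0 fe] := within_continuous_lt0 fc cab fc0.
  have [s Ss sc] := inf_adherent e0 hS.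
  have cs : c <= s := ge_inf Slb Ss.
  case: Ss => /andP[ts sb] fs0.
  suff : f s < 0 by lra.
  by apply: fe; [apply/andP; split; lra | rewrite ger0_norm ?subr_ge0 //; lra].
exists c; last split => //.
  by rewrite cb andbT lt_neqAle tc andbT; apply: contraTneq fc0 => <-; rewrite -ltNge.
move=> s /andP[ts sc]; rewrite ltNge; apply/negP => fs0.
have : c <= s by apply: ge_inf => //; split => //; apply/andP; split; lra.
lra.
Qed.

Lemma backward_ge0_of_derive_le (f df : R -> R) (m a b : R) :
  {within `[a, b], continuous f} ->
  (forall x, a < x < b -> is_derive x 1 f (df x)) ->
  (forall x, a < x < b -> f x < 0 -> df x <= m * f x) ->
  0 <= f b -> forall t, a <= t <= b -> 0 <= f t.
Proof.
move=> fc fd dfle fb0 t tab; rewrite leNgt; apply/negP => ft0.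
have [c /andP[tc cb] [fc0 fneg]] := first_nonneg_after fc tab ft0 fb0.
pose h s := expR (- m * s) * f s.
have hd x : x \in `]t, c[ -> is_derive x 1 h (expR (- m * x) * (df x - m * f x)).
  rewrite in_itv /= => /andP[tx xc].
  have xab : a < x < b by apply/andP; split; lra.
  apply: is_derive_eq.
  - exact: (is_deriveM (is_derive_expRM (- m) x) (fd x xab)).
  - by rewrite /GRing.scale /=; ring.
have hc : {within `[t, c], continuous h}.
  have hab : {within `[a, b], continuous h}.
    have -> : h = (fun s => expR (- m * s)) \* f by [].
    move=> y; apply: continuousM; last exact: fc.
    apply: continuous_subspaceT => z.
    by apply/differentiable_continuous/derivable1_diffP; case: (is_derive_expRM (- m) z).
  apply: continuous_subspaceW hab => y /=; rewrite !in_itv /= => /andP[? ?].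
  by apply/andP; split; lra.
have [x] := MVT tc hd hc; rewrite in_itv /= => /andP[tx xc] hdiff.
have fx0 : f x < 0 by apply: fneg; rewrite ltW.
have dfx : df x - m * f x <= 0.
  by rewrite subr_le0; apply: dfle fx0; apply/andP; split; lra.
have : h c - h t <= 0.
  rewrite hdiff; apply: mulr_le0_ge0; last by rewrite subr_ge0 ltW.
  by rewrite mulr_ge0_le0 ?expR_ge0.
have : 0 <= h c by rewrite mulr_ge0 ?expR_ge0.
have : h t < 0 by rewrite pmulr_rlt0 ?expR_gt0.
lra.
Qed.

End RealAnalysis.

Lemma adjoint_rhs_le (R : realType) (N : nat) (A : 'M[R]_N) (beta m : R)
    (i lam u : 'I_N -> R) j :
  (forall k l, 0 <= A k l) -> 0 <= beta ->
  (forall l, 0 <= lam l * (1 - i l)) -> 0 <= u j -> lam j < 0 ->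
  m <= beta * \sum_(k < N) A j k * i k ->
  adjoint_rhs A beta i lam u j <= m * lam j.
Proof.
move=> A0 beta0 lamS0 uj0 lamj0 mle; rewrite /adjoint_rhs.
have coupling0 : 0 <= beta * \sum_(l < N) lam l * (1 - i l) * A l j.
  by rewrite mulr_ge0 // sumr_ge0 // => l _; rewrite mulr_ge0.
have : lam j * u j <= 0 by rewrite mulr_le0_ge0 // ltW.
have : beta * lam j * (\sum_(k < N) A j k * i k) <= m * lam j.
  by rewrite mulrAC ler_wnM2r // ltW.
lra.
Qed.

Theorem lemma1 (R : realType) (N : nat) (A : 'M[R]_N) (beta T : R)
  (x0 : 'I_N -> R) (g : 'I_N -> R -> R)
  (istar lamstar ustar : R -> 'I_N -> R) :
  (0 < N)%N ->
  adjacency A -> 0 < beta -> 0 < T ->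
  (forall j, 0 <= x0 j <= 1) ->
  (forall j, cost_fun (g j)) ->
  (* (ustar, istar) is admissible and optimal *)
  admissible A beta T x0 ustar istar ->
  (forall u i, admissible A beta T x0 u i ->
     (objective g T u i <= objective g T ustar istar)%E) ->
  (* optimal controls are nonnegative *)
  (forall j t, 0 <= t <= T -> 0 <= ustar t j) ->
  (* adjoint equations and terminal condition *)
  (forall j, {within `[0, T], continuous (fun t => lamstar t j)}) ->
  (forall j t, 0 < t < T ->
     is_derive t (1 : R) (fun s => lamstar s j)
       (adjoint_rhs A beta (istar t) (lamstar t) (ustar t) j)) ->
  (forall j, lamstar T j = (N%:R)^-1) ->
  (* maximum condition *)
  (forall t, 0 <= t <= T -> forall v : 'I_N -> R,
     hamiltonian A beta g (istar t) (lamstar t) v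
       <= hamiltonian A beta g (istar t) (lamstar t) (ustar t)) ->
  forall j t, 0 <= t <= T -> 0 <= lamstar t j.
Proof.
move=> _ [A01 _] beta0 T0 _ gP [_ [istar_c _]] _ ustar_ge0 lam_c lam_d lamT umax.
move=> j; pose F s := beta * \sum_(k < N) A j k * istar s k.
have Fc : {within `[0, T], continuous F}.
  move=> x; apply: continuousM; first exact: cvg_cst.
  by apply: continuous_sum => k; apply: continuousM; [exact: cvg_cst | exact: istar_c].
have [c _ Fmin] := EVT_min (ltW T0) Fc.
apply: (backward_ge0_of_derive_le (m := F c) (lam_c j) (lam_d j)); last first.
  by rewrite lamT invr_ge0 ler0n.
move=> x /andP[x_gt0 x_ltT] lamx0.
have xT : 0 <= x <= T by rewrite !ltW.
apply: adjoint_rhs_le => //.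
- by move=> k l; have [->|->] := A01 k l.
- exact: ltW.
- move=> l; apply: (hamiltonian_argmax_costate_ge0 (gP l)) (umax x xT).
  exact: ustar_ge0.
- exact: ustar_ge0.
- by apply: Fmin; rewrite in_itv.
Qed.
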